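(* Let $T$ be dependent. For every formula $\varphi(\bar x,\bar y,\bar z)$ with $\bar y,\bar z$ finite there is $n<\omega$ (depending only on $\varphi$ and $T$) such that for every $\mathbf x\in K_0$ with $\ell g(\bar x)=\ell g(\bar{\mathbf d}_{\mathbf x})$ the set $$J_{\mathbf x,\varphi}=\{t\in I_{\mathbf x}:\ n_{\mathbf x,t}\ge 2\text{ and there are }\alpha_0,\dots,\alpha_{k-1}<\ell g(\bar c_{\mathbf x,t,0})\ (k=\ell g(\bar y))\text{ and }\bar b\in{}^{\ell g(\bar z)}(A_{\mathbf x}\cup\textstyle\bigcup\{\bar c_{\mathbf x,s}:s\in I_{\mathbf x}\setminus\{t\}\})$$ $$\text{with }\mathfrak C\models\varphi[\bar{\mathbf d}_{\mathbf x},\langle(\bar c_{\mathbf x,t,0})_{\alpha_i}:i<k\rangle,\bar b]\wedge\neg\varphi[\bar{\mathbf d}_{\mathbf x},\langle(\bar c_{\mathbf x,t,1})_{\alpha_i}:i<k\rangle,\bar b]\}$$ has at most $n$ elements.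
   Context: $T$ complete first-order, $\mathfrak C$ its monster model; dependent = NIP. $K_0$ is the family of $\mathbf x=(A,B,\bar{\mathbf c},\bar{\mathbf d})$ where $B\subseteq A$, $\bar{\mathbf d}$ is a sequence, $I=I_{\mathbf x}$ is a linear order, $\bar{\mathbf c}=\langle\bar c_{t,n}:t\in I,n<n_t\rangle$ with $1\le n_t\le\omega$, each $\bar c_{t,n}$ a finite sequence with $\ell g(\bar c_{t,n})$ depending only on $t$, $\bar c_t=\bar c_{t,0}{}^\frown\bar c_{t,1}{}^\frown\cdots$, and for each $t\in I$ the sequence $\langle\bar c_{t,n}:n<n_t\rangle$ is indiscernible over $A\cup\bigcup\{\bar c_s:s\in I\setminus\{t\}\}$. Write $A_{\mathbf x},\bar{\mathbf d}_{\mathbf x},I_{\mathbf x},\bar c_{\mathbf x,t},\bar c_{\mathbf x,t,n},n_{\mathbf x,t}$; $(\bar c)_\alpha$ denotes the $\alpha$-th entry of $\bar c$. *)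

From mathcomp Require Import all_boot.
Set Implicit Arguments.
Unset Strict Implicit.
Unset Printing Implicit Defensive.

Record signature : Type := Signature {
  funs : Type; rels : Type;
  fun_ar : funs -> nat; rel_ar : rels -> nat }.

Section Syntax.
Variable L : signature.

Inductive term (V : Type) : Type :=
| tvar : V -> term V
| tapp : forall f : funs L, ('I_(fun_ar f) -> term V) -> term V.

(** formulas with free variables in V (de Bruijn style: [fAll] binds [None]) *)
Inductive formula : Type -> Type :=
| fFalse : forall V, formula V
| fEq : forall V, term V -> term V -> formula V
| fRel : forall V (r : rels L), ('I_(rel_ar r) -> term V) -> formula V
| fImp : forall V, formula V -> formula V -> formula V
| fAll : forall V, formula (option V) -> formula V.

Definition sentence := formula Empty_set.

Record structure : Type := Structure {
  carrier :> Type;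
  ifun : forall f : funs L, ('I_(fun_ar f) -> carrier) -> carrier;
  irel : forall r : rels L, ('I_(rel_ar r) -> carrier) -> Prop }.

Fixpoint eval (M : structure) V (e : V -> M) (t : term V) : M :=
  match t with
  | tvar v => e v
  | tapp f a => @ifun M f (fun i => eval e (a i))
  end.

Fixpoint sat (M : structure) V (phi : formula V) : (V -> M) -> Prop :=
  match phi in formula V0 return (V0 -> M) -> Prop with
  | fFalse _ => fun _ => False
  | fEq _ t1 t2 => fun e => eval e t1 = eval e t2
  | fRel _ r a => fun e => @irel M r (fun i => eval e (a i))
  | fImp _ p q => fun e => sat p e -> sat q e
  | fAll _ p => fun e => forall x : M,
      sat p (fun o => match o with Some v => e v | None => x end)
  end.

Definition holds (M : structure) (s : sentence) : Prop :=
  sat s (fun v : Empty_set => match v return carrier M with end).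

Definition is_model (M : structure) (T : sentence -> Prop) : Prop :=
  inhabited M /\ forall s, T s -> holds M s.

Definition complete (T : sentence -> Prop) : Prop :=
  (exists M : structure, is_model M T) /\
  forall s : sentence,
    (forall M : structure, is_model M T -> holds M s) \/
    (forall M : structure, is_model M T -> ~ holds M s).

Definition env2 (M : structure) (A B : Type) (a : A -> M) (b : B -> M)
  (w : A + B) : M := match w with inl x => a x | inr y => b y end.

Definition dependent (T : sentence -> Prop) : Prop :=
  forall (p q : nat) (phi : formula ('I_p + 'I_q)) (M : structure),
    is_model M T ->
    ~ exists (a : nat -> 'I_p -> M) (b : (nat -> bool) -> 'I_q -> M),
        forall (i : nat) (S : nat -> bool), sat phi (env2 (a i) (b S)) <-> S i.

(** n < n_t, where n_t in {1,...,omega}; [None] encodes omega *)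
Definition nlt (n : nat) (o : option nat) : Prop :=
  match o with None => True | Some m => n < m end.

Definition strict_linear (I : Type) (lt : I -> I -> Prop) : Prop :=
  (forall a, ~ lt a a) /\ (forall a b c, lt a b -> lt b c -> lt a c) /\
  (forall a b, lt a b \/ a = b \/ lt b a).

Definition indiscernible (M : structure) (N : option nat) (len : nat)
  (c : nat -> 'I_len -> M) (P : M -> Prop) : Prop :=
  forall (r p : nat) (psi : formula (('I_r * 'I_len) + 'I_p)) (b : 'I_p -> M),
    (forall l, P (b l)) ->
    forall u v : 'I_r -> nat,
      (forall j j' : 'I_r, j < j' -> u j < u j') ->
      (forall j j' : 'I_r, j < j' -> v j < v j') ->
      (forall j, nlt (u j) N) -> (forall j, nlt (v j) N) ->
      (sat psi (env2 (fun w : 'I_r * 'I_len => c (u w.1) w.2) b) <->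
       sat psi (env2 (fun w : 'I_r * 'I_len => c (v w.1) w.2) b)).

Record K0data (M : structure) (X : Type) : Type := K0Data {
  kA : M -> Prop;
  kB : M -> Prop;
  kd : X -> M;
  kI : Type;
  klt : kI -> kI -> Prop;
  knt : kI -> option nat;     (* n_t, None = omega *)
  klen : kI -> nat;
  kc : forall t : kI, nat -> 'I_(klen t) -> M  (* c_{t,n}, for n < n_t *)
}.

Arguments kA {M X} k _.
Arguments kB {M X} k _.
Arguments kd {M X} k _.
Arguments kI {M X} k.
Arguments klt {M X} k _ _.
Arguments knt {M X} k _.
Arguments klen {M X} k _.
Arguments kc {M X} k t _ _.

Definition other_c (M : structure) X (x : K0data M X) (t : kI x) (y : M) : Prop :=
  exists s, s <> t /\ exists n, nlt n (knt x s) /\ exists i, y = kc x s n i.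

Arguments other_c {M X} x t y.

Definition in_K0 (M : structure) X (x : K0data M X) : Prop :=
  (forall y, kB x y -> kA x y) /\
  strict_linear (klt x) /\
  (forall t, match knt x t return Prop with None => True | Some m => 1 <= m end) /\
  (forall t, indiscernible (knt x t) (kc x t) (fun y => kA x y \/ other_c x t y)).

Definition ge2 (o : option nat) : Prop :=
  match o with None => True | Some m => 2 <= m end.

Definition env3 (M : structure) (A B C : Type) (a : A -> M) (b : B -> M)
  (c : C -> M) (w : (A + B) + C) : M :=
  match w with inl (inl x) => a x | inl (inr y) => b y | inr z => c z end.

Definition inJ (M : structure) X (x : K0data M X) (k m : nat)
  (phi : formula ((X + 'I_k) + 'I_m)) (t : kI x) : Prop :=
  ge2 (knt x t) /\
  exists (alpha : 'I_k -> 'I_(klen x t)) (b : 'I_m -> M),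
    (forall l, kA x (b l) \/ other_c x t (b l)) /\
    sat phi (env3 (kd x) (fun i => kc x t 0 (alpha i)) b) /\
    ~ sat phi (env3 (kd x) (fun i => kc x t 1 (alpha i)) b).

End Syntax.

Arguments in_K0 {L M X} x.
Arguments inJ {L M X} x {k m} phi t.
Arguments other_c {L M X} x t y.
Arguments kA {L M X} k _.
Arguments kB {L M X} k _.
Arguments kd {L M X} k _.
Arguments kI {L M X} k.
Arguments klt {L M X} k _ _.
Arguments knt {L M X} k _.
Arguments klen {L M X} k _.
Arguments kc {L M X} k t _ _.

(** propositional list membership (no eqType needed) *)
Fixpoint lmem (I : Type) (t : I) (s : seq I) : Prop :=
  match s with [::] => False | u :: s' => u = t \/ lmem t s' end.

From mathcomp Require Import all_boot zify generic_quotient.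
From mathcomp Require Import boolp filter.

Set Implicit Arguments.
Unset Strict Implicit.
Unset Printing Implicit Defensive.

(* Let J be large.  The witness b for t in J lies in A and the c_s, s <> t, so
   it leaves A \cup \bigcup_{s <> t'} c_s for at most m indices t'; a
   sparse-relation argument then finds t_0, ..., t_(N-1) in J whose witnesses
   b_i all lie in A \cup \bigcup_{s <> t_j} c_s for every j.  Over such
   parameters indiscernibility exchanges c_(t_j,0) and c_(t_j,1) one j at a
   time, carrying the alternation of phi at d (true with the c_(t_i,0), false
   with the c_(t_i,1)) to any pattern: for every S there is d' with
   phi(d', c_(t_i,0), b_i) iff i is in S.  So phi(y z; d), with d cut down to
   the finitely many variables phi uses, shatters N-sets in models of T for
   every N, and an ultraproduct over a nonprincipal ultrafilter turns this into
   the independence property. *)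

(** * Syntax *)

Section Renaming.
Variable L : signature.

Fixpoint trename V W (f : V -> W) (t : term L V) : term L W :=
  match t with
  | tvar v => tvar L (f v)
  | tapp g a => tapp (fun i => trename f (a i))
  end.

Fixpoint frename V (p : formula L V) : forall W, (V -> W) -> formula L W :=
  match p in formula _ V0 return forall W, (V0 -> W) -> formula L W with
  | fFalse _ => fun W _ => fFalse L W
  | fEq _ t1 t2 => fun W f => fEq (trename f t1) (trename f t2)
  | fRel _ r a => fun W f => fRel (fun i => trename f (a i))
  | fImp _ p q => fun W f => fImp (frename p f) (frename q f)
  | fAll _ p => fun W f => fAll (frename p (omap f))
  end.

Lemma eval_rename (M : structure L) V W (f : V -> W) (e : W -> M) t :
  eval e (trename f t) = eval (e \o f) t.
Proof. by elim: t => //= g a IH; congr ifun; apply: funext. Qed.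

Lemma sat_rename (M : structure L) V (p : formula L V) W (f : V -> W) (e : W -> M) :
  sat (frename p f) e <-> sat p (e \o f).
Proof.
elim: p W f e => {V} [V|V t1 t2|V r a|V p IHp q IHq|V p IHp] W f e /=.
- by [].
- by rewrite !eval_rename.
- by rewrite (funext (fun i => eval_rename f e (a i))).
- by rewrite IHp IHq.
- by split=> H y; move: (H y); rewrite IHp; congr sat; apply: funext => -[].
Qed.

End Renaming.

Section Connectives.
Variable L : signature.

Definition fNot V (p : formula L V) := fImp p (fFalse L V).
Definition fAnd V (p q : formula L V) := fNot (fImp p (fNot q)).
Definition fEx V (p : formula L (option V)) := fNot (fAll (fNot p)).

Fixpoint fAnds V (s : seq (formula L V)) : formula L V :=
  if s is p :: s' then fAnd p (fAnds s') else fNot (fFalse L V).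

Definition fLit V (p : formula L V) (b : bool) := if b then p else fNot p.

Variable M : structure L.

Lemma sat_fEx V (p : formula L (option V)) (e : V -> M) :
  sat (fEx p) e <-> exists y, sat p (fun o => if o is Some v then e v else y).
Proof.
split=> [|[y hy] H]; last exact: H hy.
by move=> H; apply: contrapT => N; apply: H => y hy; apply: N; exists y.
Qed.

Lemma sat_fAnd V (p q : formula L V) (e : V -> M) :
  sat (fAnd p q) e <-> sat p e /\ sat q e.
Proof.
split=> [H|[hp hq] H]; last exact: H hp hq.
have hp : sat p e by apply: contrapT => N; apply: H => /N.
by split=> //; apply: contrapT => N; apply: H => _ /N.
Qed.

Lemma sat_fAnds V (s : seq (formula L V)) (e : V -> M) :
  sat (fAnds s) e <-> forall p, List.In p s -> sat p e.
Proof.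
elim: s => [|p s IH]; first by split=> [_ p []|_ []].
rewrite [fAnds _]/= sat_fAnd IH; split=> [[hp hs] q [<- //|]|H]; first exact: hs.
by split=> [|q hq]; apply: H; [left|right].
Qed.

Lemma sat_fLit V (p : formula L V) b (e : V -> M) :
  sat (fLit p b) e <-> (sat p e <-> b).
Proof.
by case: b => /=; split=> H; [split | apply/H | split=> // /H | move/H].
Qed.

Definition of_sum_ord0 V (w : V + 'I_0) : V.
Proof. by case: w => [v|[]]. Defined.

Definition pop_last V Q (w : V + 'I_Q.+1) : option (V + 'I_Q) :=
  match w with
  | inl v => Some (inl v)
  | inr i => omap inr (unlift ord_max i)
  end.

Fixpoint fExists V Q : formula L (V + 'I_Q) -> formula L V :=
  if Q is Q'.+1 then fun p => fExists (fEx (frename p (@pop_last V Q')))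
  else fun p => frename p (@of_sum_ord0 V).

Lemma sat_fExists Q V (p : formula L (V + 'I_Q)) (e : V -> M) :
  sat (fExists p) e <-> exists d : 'I_Q -> M, sat p (env2 e d).
Proof.
elim: Q V p e => [|Q IH] V p e /=.
  rewrite sat_rename; split=> [H|[d]]; last by congr sat; apply: funext => -[|[]].
  by exists (fun i => e (of_sum_ord0 (inr i))); move: H; congr sat; apply: funext => -[|[]].
rewrite IH; split=> [[d /sat_fEx [y]]|[d H]].
  rewrite sat_rename => H.
  exists (fun i => if unlift ord_max i is Some j then d j else y).
  by move: H; congr sat; apply: funext => -[v|i] //=; case: unlift.
exists (fun j => d (lift ord_max j)); apply/sat_fEx; exists (d ord_max).
rewrite sat_rename; move: H; congr sat; apply: funext => -[v|i] //=.
by case: unliftP => [j ->|->].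
Qed.

End Connectives.

Lemma In_memP (T : eqType) (x : T) (s : seq T) : reflect (List.In x s) (x \in s).
Proof.
elim: s => [|y s IH] /=; first by right.
rewrite in_cons; apply: (iffP orP) => [[/eqP->|/IH]|[->|/IH]]; by [left|right|rewrite eqxx].
Qed.

Lemma In_pmap A B (f : A -> option B) (s : seq A) a b :
  f a = Some b -> List.In a s -> List.In b (pmap f s).
Proof.
move=> fa; elim: s => //= a' s IH [->|/IH]; first by rewrite fa; left.
by case: (f a') => [b'|] //; right.
Qed.

Section FreeVariables.
Variable L : signature.

Fixpoint fvt V (t : term L V) : seq V :=
  match t with
  | tvar v => [:: v]
  | tapp g a => List.flat_map (fun i => fvt (a i)) (enum 'I_(fun_ar g))
  end.

Fixpoint fvf V (p : formula L V) : seq V :=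
  match p with
  | fFalse _ => [::]
  | fEq _ t1 t2 => fvt t1 ++ fvt t2
  | fRel _ r a => List.flat_map (fun i => fvt (a i)) (enum 'I_(rel_ar r))
  | fImp _ p q => fvf p ++ fvf q
  | fAll _ p => pmap id (fvf p)
  end.

Lemma In_flat_map_enum n V (f : 'I_n -> seq V) i v :
  List.In v (f i) -> List.In v (List.flat_map f (enum 'I_n)).
Proof.
by move=> fv; apply/List.in_flat_map; exists i; split=> //; apply/In_memP; rewrite mem_enum.
Qed.

Variable M : structure L.

Lemma eval_agree V (t : term L V) (e1 e2 : V -> M) :
  (forall v, List.In v (fvt t) -> e1 v = e2 v) -> eval e1 t = eval e2 t.
Proof.
elim: t => [v|g a IH] /= H; first by apply: H; left.
by congr ifun; apply: funext => i; apply: IH => v hv; apply/H/In_flat_map_enum/hv.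
Qed.

Lemma sat_agree V (p : formula L V) (e1 e2 : V -> M) :
  (forall v, List.In v (fvf p) -> e1 v = e2 v) -> (sat p e1 <-> sat p e2).
Proof.
elim: p e1 e2 => {V} [V|V t1 t2|V r a|V p IHp q IHq|V p IHp] e1 e2 /= H.
- by [].
- by rewrite !(@eval_agree _ _ e1 e2) // => v hv; apply: H; apply/List.in_or_app; [right|left].
- suff -> : (fun i => eval e1 (a i)) = (fun i => eval e2 (a i)) by [].
  by apply: funext => i; apply: eval_agree => v hv; apply/H/In_flat_map_enum/hv.
- by rewrite (IHp e1 e2) ?(IHq e1 e2) // => v hv; apply: H; apply/List.in_or_app; [right|left].
- have agree y o : List.In o (fvf p) ->
      (if o is Some v then e1 v else y) = (if o is Some v then e2 v else y).
    by case: o => [v hv|//]; apply/H/(In_pmap (f := id))/hv.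
  by split=> H1 y; move: (H1 y); rewrite (IHp _ _ (agree y)).
Qed.

End FreeVariables.

(* [d'] lists the values of [d] at the first-block variables occurring in
   [phi]; [m0] is padding. *)
Lemma finite_first_block L X Y Z (phi : formula L ((X + Y) + Z)) :
  exists Q (phi' : formula L (('I_Q + Y) + Z)),
    forall (M : structure L) (m0 : M) (d : X -> M), exists d' : 'I_Q -> M,
      forall y z, sat phi (env3 d y z) <-> sat phi' (env3 d' y z).
Proof.
pose l : seq {classic X} :=
  pmap (fun w => if w is inl (inl x) then Some x else None) (fvf phi).
pose G (w : (X + Y) + Z) : ('I_(size l).+1 + Y) + Z := match w with
  | inl (inl x) => inl (inl (inord (index (x : {classic X}) l)))
  | inl (inr y) => inl (inr y) | inr z => inr z end.
exists (size l).+1, (frename phi G) => M m0 d.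
exists (fun j => nth m0 (map d l) j) => y z; rewrite sat_rename.
apply: sat_agree => -[[x|//]|//] hx /=.
have xl : x \in l by apply/In_memP/(In_pmap _ hx).
rewrite inordK ?ltnS ?index_size // (nth_map x) ?index_mem //.
by rewrite (nth_index (x : {classic X}) xl).
Qed.

Section Patterns.
Variables (L : signature) (N k m Q : nat).

Definition block_slot (i : 'I_N) (w : ('I_Q + 'I_k) + 'I_m) :
    (('I_N * 'I_k) + ('I_N * 'I_m)) + 'I_Q :=
  match w with
  | inl (inl q) => inr q
  | inl (inr a) => inl (inl (i, a))
  | inr l => inl (inr (i, l))
  end.

Definition pattern_formula (phi : formula L (('I_Q + 'I_k) + 'I_m)) (S : 'I_N -> bool) :
    formula L (('I_N * 'I_k) + ('I_N * 'I_m)) :=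
  fExists (fAnds [seq fLit (frename phi (block_slot i)) (S i) | i <- enum 'I_N]).

Lemma sat_pattern_formula (M : structure L) phi S (E : ('I_N * 'I_k) + ('I_N * 'I_m) -> M) :
  sat (pattern_formula phi S) E <-> exists d, forall i,
    sat phi (env3 d (fun a => E (inl (i, a))) (fun l => E (inr (i, l)))) <-> S i.
Proof.
have env_slot d i : env2 E d \o block_slot i =
    env3 d (fun a => E (inl (i, a))) (fun l => E (inr (i, l))).
  by apply: funext => -[[]|].
rewrite sat_fExists; split=> -[d H]; exists d.
  move=> i; rewrite -env_slot -sat_rename -sat_fLit; move/sat_fAnds: H; apply.
  by apply/List.in_map_iff; exists i; split=> //; apply/In_memP; rewrite mem_enum.
apply/sat_fAnds => p /List.in_map_iff [i [<- _]].
by rewrite sat_fLit sat_rename env_slot.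
Qed.

Definition cat_env (M : structure L) (y : 'I_k -> M) (z : 'I_m -> M) (w : 'I_(k + m)) : M :=
  match split w with inl a => y a | inr l => z l end.

Definition opp_var (w : ('I_Q + 'I_k) + 'I_m) : 'I_(k + m) + 'I_Q :=
  match w with
  | inl (inl q) => inr q
  | inl (inr a) => inl (lshift m a)
  | inr l => inl (rshift k l)
  end.

(* [phi(d; y, z)] read as a formula in the variables [(y, z)] with parameters [d] *)
Definition fopp (phi : formula L (('I_Q + 'I_k) + 'I_m)) := frename phi opp_var.

Lemma sat_fopp (M : structure L) phi y z (d : 'I_Q -> M) :
  sat (fopp phi) (env2 (cat_env y z) d) <-> sat phi (env3 d y z).
Proof.
rewrite sat_rename; suff E : env2 (cat_env y z) d \o opp_var =1 env3 d y z by rewrite (funext E).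
move=> [[q|a]|l] //=; rewrite /cat_env.
  by rewrite -[lshift m a]/(unsplit (inl a)) unsplitK.
by rewrite -[rshift k l]/(unsplit (inr l)) unsplitK.
Qed.

End Patterns.

(** * Sparse relations *)

Section SparseRelation.
Variables (T : finType) (E : rel T) (m : nat).

Lemma card_set_in_sum (A : {set T}) (P : pred T) : #|[set w in A | P w]| = \sum_(w in A) P w.
Proof. by rewrite -sum1dep_card big_mkcondr; apply: eq_bigr => w _; case: (P w). Qed.

Lemma exists_small_indegree (A : {set T}) : A != set0 ->
  {in A, forall v, #|[set w in A | E v w]| <= m} ->
  exists2 v, v \in A & #|[set w in A | E w v]| <= m.
Proof.
move=> A0 out_m; apply/exists_inP; apply: contraT; rewrite negb_exists_in => /forall_inP big_in.
have in_le : \sum_(v in A) #|[set w in A | E w v]| <= \sum_(v in A) m.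
  rewrite (eq_bigr _ (fun v _ => card_set_in_sum A (E^~ v))) exchange_big /=.
  by apply: leq_sum => w wA; rewrite -card_set_in_sum; apply: out_m.
have in_gt : \sum_(v in A) m.+1 <= \sum_(v in A) #|[set w in A | E w v]|.
  by apply: leq_sum => v /big_in; rewrite ltnNge.
move: in_le in_gt A0; rewrite !sum_nat_const -card_gt0; nia.
Qed.

(* Greedy: a vertex of in-degree at most [m] has at most [2 m] neighbours. *)
Lemma sparse_independent_set N (A : {set T}) :
  {in A, forall v, #|[set w in A | E v w]| <= m} -> (2 * m).+1 * N <= #|A| ->
  exists B : {set T},
    [/\ B \subset A, #|B| = N & {in B &, forall v w, v != w -> ~~ E v w}].
Proof.
elim: N A => [|N IH] A out_m le_NA.
  by exists set0; rewrite sub0set cards0; split=> // v; rewrite inE.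
have [v vA in_m] : exists2 v, v \in A & #|[set w in A | E w v]| <= m.
  by apply: exists_small_indegree out_m; rewrite -card_gt0; lia.
pose far := A :\: (v |: ([set w in A | E v w] :|: [set w in A | E w v])).
have far_A : far \subset A by apply: subsetDl.
have out_far : {in far, forall w, #|[set u in far | E w u]| <= m}.
  move=> w /(subsetP far_A) wA; apply: leq_trans (out_m w wA).
  by apply/subset_leq_card/subsetP => u; rewrite !inE => /andP[/andP[_ ->] ->].
have le_N_far : (2 * m).+1 * N <= #|far|.
  have := out_m v vA; rewrite cardsD.
  have := (leq_card_setU [set w in A | E v w] [set w in A | E w v]).1.
  have := subset_leq_card (subsetIr A (v |: ([set w in A | E v w] :|: [set w in A | E w v]))).
  have := (leq_card_setU [set v] ([set w in A | E v w] :|: [set w in A | E w v])).1.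
  rewrite cards1; nia.
have [B [B_far card_B B_indep]] := IH far out_far le_N_far.
have vB : v \notin B by apply/negP => /(subsetP B_far); rewrite !inE eqxx.
exists (v |: B); split; first by rewrite subUset sub1set vA (subset_trans B_far).
  by rewrite cardsU1 vB card_B.
have v_far w : w \in B -> ~~ E v w && ~~ E w v.
  move/(subsetP B_far); rewrite !inE; case: (w \in A); rewrite ?andbF ?andbT //=.
  by rewrite !negb_or => /and3P[_ -> ->].
move=> x y; rewrite !inE => /predU1P[->|xB] /predU1P[->|yB]; rewrite ?eqxx //.
- by case/andP: (v_far y yB).
- by case/andP: (v_far x xB).
- exact: B_indep.
Qed.
End SparseRelation.

Lemma pairwise_good_subfamily (I : finType) (Y : Type) (P : I -> Y -> Prop)
    (m N : nat) (b : I -> 'I_m -> Y) :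
  (forall i l, P i (b i l)) ->
  (forall i l j j', ~ P j (b i l) -> ~ P j' (b i l) -> j = j') ->
  (2 * m).+1 * N <= #|I| ->
  exists sel : 'I_N -> I, injective sel /\ forall i j l, P (sel j) (b (sel i) l).
Proof.
move=> b_P bad_uniq le_NI.
pose E i j := `[< exists l, ~ P j (b i l) >].
have out_m : {in [set: I], forall i, #|[set j in [set: I] | E i j]| <= m}.
  move=> i _; pose g l := odflt i [pick j | `[< ~ P j (b i l) >]].
  rewrite -[m in _ <= m]card_ord; apply: (leq_trans _ (leq_imset_card g _)).
  apply/subset_leq_card/subsetP => j; rewrite !inE => /asboolP[l nPj].
  apply/imsetP; exists l => //; rewrite /g.
  case: pickP => [j' /asboolP nPj'|/(_ j)/asboolPn/(_ nPj)//]; exact: bad_uniq nPj nPj'.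
have le_N_setT : (2 * m).+1 * N <= #|[set: I]| by rewrite cardsT.
have [B [_ card_B B_indep]] := sparse_independent_set out_m le_N_setT.
pose sel i := enum_val (cast_ord (esym card_B) i).
exists sel; split=> [i j /enum_val_inj/cast_ord_inj //|i j l].
have [<-//|ne] := eqVneq (sel i) (sel j).
have /asboolPn/forallNP := B_indep _ _ (enum_valP _) (enum_valP _) ne.
by move=> /(_ l)/contrapT.
Qed.

Lemma lmem_In (I : Type) (t : I) (s : seq I) : lmem t s <-> List.In t s.
Proof. by elim: s => //= u s ->. Qed.

Lemma uncovered_family (I : Type) (P : I -> Prop) n :
  ~ (exists s : seq I, size s <= n /\ forall t, P t -> lmem t s) ->
  exists f : 'I_n.+1 -> I, injective f /\ forall i, P (f i).
Proof.
move=> uncovered.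
have [t0 Pt0] : exists t, P t.
  by apply: contrapT => /forallNP none; apply: uncovered; exists [::]; split=> // t /none.
suff: forall h, h <= n.+1 -> exists f : 'I_h -> I, injective f /\ forall i, P (f i) by apply.
elim=> [|h IH] le_h; first by exists (fun=> t0); split=> [[]|[]].
have [f [f_inj Pf]] := IH (ltnW le_h).
have [t [Pt t_new]] : exists t, P t /\ ~ List.In t [seq f i | i <- enum 'I_h].
  apply: contrapT => /forallNP old; apply: uncovered; exists [seq f i | i <- enum 'I_h].
  split=> [|t Pt]; first by rewrite size_map size_enum_ord.
  by apply/lmem_In; apply: contrapT => nt; apply: (old t).
have f_old i : List.In (f i) [seq f i | i <- enum 'I_h].
  by apply: List.in_map; apply/In_memP; rewrite mem_enum.
exists (fun i => if unlift ord_max i is Some j then f j else t); split=> [i j|i]; last first.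
  by case: unlift.
case: unliftP => [i' ->|->]; case: unliftP => [j' ->|->] //.
- by move/f_inj ->.
- by move=> fi; case: t_new; rewrite -fi.
- by move=> fj; case: t_new; rewrite fj.
Qed.

(** * Ultraproducts *)

Local Open Scope quotient_scope.

Section Ultraproduct.
Variables (L : signature) (I : Type) (Ms : I -> structure L) (U : (I -> Prop) -> Prop).
Hypothesis U_ultra : UltraFilter U.

Definition uprod := {classic (forall i, Ms i)}.
Definition ueq (f g : uprod) : bool := `[< U (fun i => f i = g i) >].

Lemma ueq_refl : reflexive ueq.
Proof. by move=> f; apply/asboolP; apply: filterE. Qed.

Lemma ueq_sym : symmetric ueq.
Proof. by move=> f g; apply/asboolP/asboolP; apply: filterS => i. Qed.

Lemma ueq_trans : transitive ueq.
Proof.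
by move=> g f h /asboolP fg /asboolP gh; apply/asboolP; apply: filterS2 fg gh => i -> ->.
Qed.

Canonical ueq_equiv := EquivRel ueq ueq_refl ueq_sym ueq_trans.

Definition ucarrier := {eq_quot ueq}.

Lemma upi_eq (f g : uprod) :
  \pi_ucarrier f = \pi_ucarrier g <-> U (fun i => f i = g i).
Proof. by split=> [/(eqmodP ueq_equiv)/asboolP|/asboolP/(eqmodP ueq_equiv)]. Qed.

Lemma repr_upi (f : uprod) : U (fun i => repr (\pi_ucarrier f) i = f i).
Proof. by apply/upi_eq; rewrite reprK. Qed.

Lemma ufilter_iff (B P P' : I -> Prop) :
  U B -> (forall i, B i -> (P i <-> P' i)) -> (U P <-> U P').
Proof. by move=> UB PP'; split; apply: filterS2 UB => i /PP' ->. Qed.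

Definition ultraproduct : structure L := {|
  carrier := ucarrier;
  ifun g a := \pi_ucarrier (fun i => ifun (fun j => repr (a j) i));
  irel r a := U (fun i => irel (fun j => repr (a j) i)) |}.

Definition ucomponent V (e : V -> ultraproduct) i : V -> Ms i := fun v => repr (e v) i.

Lemma los_eval V (e : V -> ultraproduct) t :
  eval e t = \pi_ucarrier (fun i => eval (ucomponent e i) t).
Proof.
elim: t => [v|g a IH] /=; first by rewrite -[e v]reprK.
apply/upi_eq.
apply: filterS (filter_forall _ (fun j => repr_upi (fun i => eval (ucomponent e i) (a j)))).
by move=> i H; congr ifun; apply: funext => j; rewrite IH H.
Qed.

Hypothesis Ms0 : forall i, Ms i.

Lemma los V (p : formula L V) (e : V -> ultraproduct) :
  sat p e <-> U (fun i => sat p (ucomponent e i)).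
Proof.
elim: p e => {V} [V|V t1 t2|V r a|V p IHp q IHq|V p IHp] e /=.
- by split=> // /filter_const.
- by rewrite !los_eval upi_eq.
- apply: ufilter_iff
    (filter_forall _ (fun j => repr_upi (fun i => eval (ucomponent e i) (a j)))) _.
  move=> i H.
  suff -> : (fun j => repr (eval e (a j)) i) = (fun j => eval (ucomponent e i) (a j)) by [].
  by apply: funext => j; rewrite los_eval H.
- rewrite IHp IHq; split=> [H|Hpq Hp]; last by apply: filterS2 Hpq Hp => i; apply.
  have [Up|Unp] := in_ultra_setVsetC (fun i => sat p (ucomponent e i)) U_ultra.
    by apply: filterS (H Up) => i ? _.
  by apply: filterS Unp => i np /np.
- have ext y i : ucomponent (fun o => if o is Some v then e v else y) i =
      (fun o => if o is Some v then ucomponent e i v else repr y i).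
    by apply: funext => -[].
  split=> [H|H y]; last by rewrite IHp; apply: filterS H => i Hi; rewrite ext; apply: Hi.
  pose P i y := sat p (fun o => if o is Some v then ucomponent e i v else y).
  have [//|Ucounter] := in_ultra_setVsetC (fun i => forall y, P i y) U_ultra.
  pose w i : Ms i := if pselect (exists y, ~ P i y) is left ex then sval (cid ex) else Ms0 i.
  have Hw := H (\pi_ucarrier w); rewrite IHp in Hw.
  suff: U (fun=> False) by move/filter_const.
  apply: filterS3 Ucounter Hw (repr_upi w) => i /existsNP ex; rewrite ext => Hwi wi.
  have : P i (w i) by move: Hwi; congr sat; apply: funext => -[v|] //=; exact: wi.
  by rewrite /w; case: pselect => [{}ex|//]; case: (cid ex).
Qed.

Lemma los_upi (V : finType) (p : formula L V) (e : forall i, V -> Ms i) :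
  sat (M := ultraproduct) p (fun v => \pi_ucarrier (fun i => e i v)) <->
  U (fun i => sat p (e i)).
Proof.
rewrite los; apply: ufilter_iff (filter_forall _ (fun v => repr_upi (fun i => e i v))) _.
move=> i H; suff -> : ucomponent (fun v => \pi_ucarrier (fun i => e i v)) i = e i by [].
exact: funext H.
Qed.

Lemma ultraproduct_model (T : sentence L -> Prop) :
  (forall i, is_model (Ms i) T) -> is_model ultraproduct T.
Proof.
move=> MsT; split=> [|s Ts]; first by constructor; exact: (\pi_ucarrier Ms0).
rewrite /holds los; apply: filterE => i.
suff -> : ucomponent (fun v : Empty_set => match v return ultraproduct with end) i =
  (fun v => match v with end) by apply: (MsT i).2.
by apply: funext => -[].
Qed.

End Ultraproduct.

Lemma dependent_choice (I : Type) (A : I -> Type) (P : forall i, A i -> Prop) :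
  (forall i, exists a, P i a) -> exists f : forall i, A i, forall i, P i (f i).
Proof. by move=> H; exists (fun i => sval (cid (H i))) => i; case: (cid (H i)). Qed.

Definition shatters L (M : structure L) p q (psi : formula L ('I_p + 'I_q)) N :=
  exists (a : 'I_N -> 'I_p -> M) (b : ('I_N -> bool) -> 'I_q -> M),
    forall i S, sat psi (env2 (a i) (b S)) <-> S i.

Section UltraproductIndependence.
Variables (L : signature) (p q : nat) (psi : formula L ('I_p + 'I_q)).
Variables (Mn : nat -> structure L) (Mn0 : forall n, Mn n) (U : (nat -> Prop) -> Prop).
Hypotheses (U_ultra : UltraFilter U) (U_gt : forall i, U (fun n => i < n)).
Hypothesis Mn_shatters : forall n, shatters (Mn n) psi n.

Lemma ultraproduct_independence :
  exists (a : nat -> 'I_p -> ultraproduct Mn U_ultra)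
         (b : (nat -> bool) -> 'I_q -> ultraproduct Mn U_ultra),
    forall i S, sat psi (env2 (a i) (b S)) <-> S i.
Proof.
have [a /dependent_choice [b ab_shatter]] := dependent_choice Mn_shatters.
pose A n i : 'I_p -> Mn n := if insub i is Some j then a n j else fun=> Mn0 n.
pose B n (S : nat -> bool) := b n (fun j => S j).
exists (fun i w => \pi_(ucarrier Mn U_ultra) (fun n => A n i w)).
exists (fun S w => \pi_(ucarrier Mn U_ultra) (fun n => B n S w)) => i S.
have -> : env2 (M := ultraproduct Mn U_ultra)
    (fun w => \pi_(ucarrier Mn U_ultra) (fun n => A n i w))
    (fun w => \pi_(ucarrier Mn U_ultra) (fun n => B n S w)) =
    (fun v => \pi_(ucarrier Mn U_ultra) (fun n => env2 (A n i) (B n S) v)).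
  by apply: funext => -[].
rewrite (los_upi _ Mn0).
have AB n : i < n -> (sat psi (env2 (A n i) (B n S)) <-> S i).
  by move=> lt_in; rewrite /A insubT; apply: ab_shatter.
split=> [H|Si]; last by apply: filterS (U_gt i) => n /AB/iffRL; apply.
have : U (fun=> S i) by apply: filterS2 H (U_gt i) => n hs /AB/iffLR; apply.
by move/filter_const.
Qed.

End UltraproductIndependence.

Lemma dependent_shatters_bounded L (T : sentence L -> Prop) : dependent T ->
  forall p q (psi : formula L ('I_p + 'I_q)),
    exists N, forall M, is_model M T -> ~ shatters M psi N.
Proof.
move=> Tdep p q psi; apply: contrapT => /forallNP unbounded.
have {}unbounded N : exists M, is_model M T /\ shatters M psi N.
  by apply: contrapT => none; apply: (unbounded N) => M MT sh; apply: none; exists M.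
have [Mn /all_and2[MnT Mn_shatters]] := choice unbounded.
have /dependent_choice[Mn0 _] : forall n, exists y : Mn n, True.
  by move=> n; case: (MnT n) => -[y] _; exists y.
have [U [U_ultra U_cofinite]] := ultraFilterLemma (@eventually_filter).
have U_gt i : U (fun n => i < n) by apply: U_cofinite; exists i.+1.
exact: (Tdep p q psi _ (ultraproduct_model U_ultra Mn0 MnT)
  (ultraproduct_independence Mn0 U_ultra U_gt Mn_shatters)).
Qed.

(** * Indiscernible sequences of K_0 *)

Section InK0.
Variables (L : signature) (M : structure L) (X : Type) (x : K0data M X).

Definition params (t : kI x) (y : M) := kA x y \/ other_c x t y.

Lemma params_unique t0 t1 t2 y :
  params t0 y -> ~ params t1 y -> ~ params t2 y -> t1 = t2.
Proof.
case=> [Ay|[s [_ [n [ns [a ->]]]]]] Nt1 Nt2; first by case: Nt1; left.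
suff E t : ~ params t (kc x s n a) -> s = t by rewrite -(E _ Nt1) -(E _ Nt2).
move=> Nt; apply: contrapT => ne; apply: Nt; right; exists s; split=> //.
by exists n; split=> //; exists a.
Qed.

Lemma nlt_bool (o : option nat) (e : bool) : ge2 o -> nlt e o.
Proof. by case: o => //= n; case: e => /=; lia. Qed.

Hypothesis Hx : in_K0 x.

Lemma kc01_indiscernible s (F : finType) (psi : formula L ('I_(klen x s) + F)) (b : F -> M) :
  ge2 (knt x s) -> (forall l, params s (b l)) ->
  (sat psi (env2 (kc x s 0) b) <-> sat psi (env2 (kc x s 1) b)).
Proof.
move=> s2 b_params; case: Hx => _ [_ [_ /(_ s) indisc]].
pose rho (w : 'I_(klen x s) + F) : ('I_1 * 'I_(klen x s)) + 'I_#|F| :=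
  match w with inl a => inl (ord0, a) | inr f => inr (enum_rank f) end.
have env_rho (n : nat) : env2 (fun w : 'I_1 * 'I_(klen x s) => kc x s n w.2)
    (fun l => b (enum_val l)) \o rho = env2 (kc x s n) b.
  by apply: funext => -[a|f] //=; rewrite enum_rankK.
rewrite -(env_rho 0) -(env_rho 1) -!sat_rename.
apply: (indisc 1 _ _ _ (fun l => b_params _) (fun=> 0) (fun=> 1)).
- by move=> j j'; rewrite !ord1.
- by move=> j j'; rewrite !ord1.
- by move=> _; apply: (nlt_bool false).
- by move=> _; apply: (nlt_bool true).
Qed.

Variables (k m Q N : nat) (t : 'I_N -> kI x).
Variables (alpha : forall i, 'I_k -> 'I_(klen x (t i))) (b : 'I_N -> 'I_m -> M).
Hypotheses (t_inj : injective t) (t_ge2 : forall i, ge2 (knt x (t i))).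
Hypothesis b_params : forall i j l, params (t j) (b i l).

Definition cenv (eps : 'I_N -> bool) (w : ('I_N * 'I_k) + ('I_N * 'I_m)) : M :=
  match w with
  | inl (i, a) => kc x (t i) (eps i) (alpha i a)
  | inr (i, l) => b i l
  end.

Lemma cenv_agree_off j eps eps' Th : (forall i, i != j -> eps i = eps' i) ->
  (sat Th (cenv eps) <-> sat Th (cenv eps')).
Proof.
move=> eps_eps'.
pose F := (({i | i != j} * 'I_k) + ('I_N * 'I_m))%type.
pose rho (w : ('I_N * 'I_k) + ('I_N * 'I_m)) : 'I_(klen x (t j)) + F :=
  match w with
  | inl (i, a) => if insub i is Some i' then inr (inl (i', a)) else inl (alpha j a)
  | inr il => inr (inr il)
  end.
pose bF (f : F) : M :=
  match f with
  | inl (i, a) => kc x (t (val i)) (eps (val i)) (alpha (val i) a)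
  | inr (i, l) => b i l
  end.
have env_rho e : (forall i, i != j -> e i = eps i) ->
    env2 (kc x (t j) (e j)) bF \o rho = cenv e.
  move=> e_eps; apply: funext => -[[i a]|[i l]] //=.
  case: insubP => [i' ne vi|/negPn/eqP -> //]; by rewrite /= vi e_eps.
have bF_params f : params (t j) (bF f).
  case: f => [[i a]|[i l]] /=; last exact: b_params.
  right; exists (t (val i)); split; first by move/t_inj/eqP; apply/negP/(valP i).
  by exists (eps (val i)); split; [apply/nlt_bool/t_ge2 | exists (alpha (val i) a)].
have [e_eq|e_ne] := eqVneq (eps j) (eps' j).
  suff -> : eps = eps' by [].
  by apply: funext => i; have [->|/eps_eps'] := eqVneq i j.
rewrite -(env_rho eps) // -(env_rho eps') => [|i /eps_eps' //].
rewrite -!sat_rename.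
have swap01 := kc01_indiscernible (frename Th rho) (t_ge2 j) bF_params.
by case: (eps j) (eps' j) e_ne swap01 => -[] // _ ? //; symmetry.
Qed.

Lemma cenv_all_false eps Th : sat Th (cenv eps) <-> sat Th (cenv (fun=> false)).
Proof.
suff step h : sat Th (cenv (fun i => eps i && (i < h))) <-> sat Th (cenv (fun=> false)).
  move: (step N); suff -> : (fun i : 'I_N => eps i && (i < N)) = eps by [].
  by apply: funext => i; rewrite ltn_ord andbT.
elim: h => [|h IH].
  suff -> : (fun i : 'I_N => eps i && (i < 0)) = (fun=> false) by [].
  by apply: funext => i; rewrite andbF.
rewrite -IH; case: (ltnP h N) => [hN|Nh].
  apply: (cenv_agree_off (j := Ordinal hN)) => i ne; rewrite ltnS leq_eqVlt.
  by move: ne; rewrite -val_eqE => /negPf ->.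
suff -> : (fun i : 'I_N => eps i && (i < h.+1)) = (fun i => eps i && (i < h)) by [].
by apply: funext => i; rewrite (leq_trans (ltn_ord i) Nh) (leq_trans (ltn_ord i) (leqW Nh)).
Qed.

Section Alternation.
Variables (phi : formula L (('I_Q + 'I_k) + 'I_m)) (d : 'I_Q -> M).
Hypothesis alternates : forall i,
  sat phi (env3 d (fun a => kc x (t i) 0 (alpha i a)) (b i)) /\
  ~ sat phi (env3 d (fun a => kc x (t i) 1 (alpha i a)) (b i)).

Lemma alternation_realizes_patterns (S : 'I_N -> bool) : exists d' : 'I_Q -> M,
  forall i, sat phi (env3 d' (fun a => kc x (t i) 0 (alpha i a)) (b i)) <-> S i.
Proof.
(* with [c_(t_i, ~~ S i)] the pattern [S] is witnessed by [d] itself *)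
have := (cenv_all_false (fun i => ~~ S i) (pattern_formula phi S)).1.
rewrite !sat_pattern_formula; apply; exists d => i /=.
by case: (alternates i) (S i) => pos neg [].
Qed.

Lemma alternation_shatters : shatters M (fopp phi) N.
Proof.
have [dS dS_S] := choice alternation_realizes_patterns.
exists (fun i => cat_env (fun a => kc x (t i) 0 (alpha i a)) (b i)), dS => i S.
by rewrite sat_fopp.
Qed.

End Alternation.

End InK0.

Lemma large_J_shatters L (M : structure L) k m Q (x : K0data M 'I_Q)
    (phi : formula L (('I_Q + 'I_k) + 'I_m)) N K (f : 'I_K -> kI x) :
  in_K0 x -> injective f -> (forall i, inJ x phi (f i)) -> (2 * m).+1 * N <= K ->
  shatters M (fopp phi) N.
Proof.
move=> Hx f_inj fJ le_NK.
have [alpha /choice[b b_J]] := dependent_choice (fun i => (fJ i).2).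
have [sel [sel_inj sel_params]] : exists sel : 'I_N -> 'I_K,
    injective sel /\ forall i j l, params (f (sel j)) (b (sel i) l).
  apply: (pairwise_good_subfamily (P := fun i => params (f i))); rewrite ?card_ord //.
    by move=> i; case: (b_J i).
  by move=> i l j j' nj nj'; apply/f_inj/(params_unique ((b_J i).1 l) nj nj').
apply: (alternation_shatters Hx (t := f \o sel) (alpha := fun i => alpha (sel i))
  (b := fun i => b (sel i)) _ _ _ (d := kd x)) => [i j /f_inj/sel_inj //|i|//|i].
- exact: (fJ (sel i)).1.
- exact: (b_J (sel i)).2.
Qed.

Definition with_params L (M : structure L) X Y (x : K0data M X) (d : Y -> M) : K0data M Y :=
  @K0Data L M Y (kA x) (kB x) d (kI x) (klt x) (knt x) (klen x) (kc x).

Lemma inJ_with_params L (M : structure L) X Y (x : K0data M X) (d : Y -> M) k m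
    (phi : formula L ((X + 'I_k) + 'I_m)) (phi' : formula L ((Y + 'I_k) + 'I_m)) t :
  (forall y z, sat phi (env3 (kd x) y z) <-> sat phi' (env3 d y z)) ->
  inJ x phi t -> inJ (with_params x d) phi' t.
Proof.
by move=> phi_phi' [t2 [alpha [b]]]; rewrite !phi_phi' => J; split=> //; exists alpha, b.
Qed.

Theorem claim2p17 (L : signature) (T : sentence L -> Prop)
  (Tcomplete : complete T) (Tdep : dependent T)
  (X : Type) (k m : nat) (phi : formula L ((X + 'I_k) + 'I_m)) :
  exists n : nat,
    forall (M : structure L), is_model M T ->
    forall x : K0data M X, in_K0 x ->
      exists s : seq (kI x), size s <= n /\
        forall t, inJ x phi t -> lmem t s.
Proof.
have [Q [phi' phi_phi']] := finite_first_block phi.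
have [N N_bound] := dependent_shatters_bounded Tdep (fopp phi').
exists ((2 * m).+1 * N) => M MT x Hx; apply: contrapT => J_large.
have [f [f_inj fJ]] := uncovered_family J_large.
have [[m0] _] := MT.
have [d dE] := phi_phi' M m0 (kd x).
apply: (N_bound M MT (large_J_shatters (x := with_params x d) Hx f_inj _ (leqnSn _))).
by move=> i; apply: inJ_with_params dE (fJ i).
Qed.
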